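(* Consider a cooperative multi-agent MDP with $N$ agents, finite individual state space $\mathcal S$ and finite individual action space $\mathcal A$ whose reward $\mathrm r$ and transition kernel $\mathbb P$ satisfy $\mathrm r(\mathbf s,\mathbf a)=\mathrm r(\kappa(\mathbf s),\kappa(\mathbf a))$ and $\mathbb P(\mathbf s'\mid\mathbf s,\mathbf a)=\mathbb P(\kappa(\mathbf s')\mid\kappa(\mathbf s),\kappa(\mathbf a))$ for all joint states/actions and all permutations $\kappa$ of the agents, and let $\nu(\mathbf a\mid\mathbf s)=\prod_{i=1}^N\mu(a_i\mid s_i)$ be a factorized policy with a shared local map $\mu$. Fix an agent, write its state as $s$ and the states of the remaining $N-1$ agents as $\mathbf s_r\in\mathcal S^{N-1}$, and write $V^\nu(s,\mathbf s_r)$ for the value of the corresponding joint state. Then for every permutation $\kappa$ of the remaining agents, $V^\nu(s,\mathbf s_r)=V^\nu(s,\kappa(\mathbf s_r))$. Moreover, there exists a function $g_\nu$ such that $V^\nu(s,\mathbf s_r)=g_\nu(s,\hat{\mathrm p}_{\mathbf s_r})$ for all $s,\mathbf s_r$, where $\hat{\mathrm p}_{\mathbf s_r}=\frac1N\sum_{s'\in\mathbf s_r}\delta_{s'}$.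
   Context: $\delta_x$ denotes the Dirac measure at $x$; the sum over $s'\in\mathbf s_r$ runs over the $N-1$ coordinates of $\mathbf s_r$ with multiplicity. The value function is $V^\nu(\mathbf s)=(1-\gamma)\mathbb E\{\sum_{t\ge0}\gamma^t\mathrm r(\mathbf s_t,\mathbf a_t)\mid \mathbf s_0=\mathbf s,\ \mathbf a_t\sim\nu(\cdot\mid\mathbf s_t)\}$ for a discount factor $\gamma\in(0,1)$. *)

From HB Require Import structures.
From mathcomp Require Import all_boot all_order all_algebra perm.
From mathcomp Require Import all_classical all_reals all_analysis.
Set Implicit Arguments. Unset Strict Implicit. Unset Printing Implicit Defensive.
Import Order.TTheory GRing.Theory Num.Theory.
Local Open Scope ring_scope.

Section MAMDP.
Variables (R : realType) (S A : finType) (N : nat).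

Definition jstate := {ffun 'I_N -> S}.
Definition jaction := {ffun 'I_N -> A}.

Definition permute (T : Type) (M : nat) (k : {perm 'I_M}) (x : {ffun 'I_M -> T})
  : {ffun 'I_M -> T} := [ffun i => x (k i)].

Definition fact_policy (mu : S -> A -> R) (s : jstate) (a : jaction) : R :=
  \prod_(i < N) mu (s i) (a i).

Variables (r : jstate -> jaction -> R) (P : jstate -> jaction -> jstate -> R)
          (nu : jstate -> jaction -> R).

Definition r_pol (s : jstate) : R := \sum_(a : jaction) nu s a * r s a.

Definition K_pol (s s' : jstate) : R := \sum_(a : jaction) nu s a * P s a s'.

Fixpoint expect_t (t : nat) (f : jstate -> R) : jstate -> R :=
  match t with
  | O => f
  | t'.+1 => fun s => \sum_(s' : jstate) K_pol s s' * expect_t t' f s'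
  end.

(* V^nu(s) = (1-gamma) E[ sum_t gamma^t r(s_t,a_t) | s_0 = s ]
          = (1-gamma) sum_t gamma^t E[ r(s_t,a_t) | s_0 = s ] *)
Definition value (gamma : R) (s : jstate) : R :=
  (1 - gamma) * limn (fun m => \sum_(t < m) gamma ^+ t * expect_t t r_pol s).

End MAMDP.

(* joint state of n.+1 agents: agent i in state s, the others in sr
   (the remaining agents enumerated in increasing order via unlift) *)
Definition join (S : Type) (n : nat) (i : 'I_n.+1) (s : S) (sr : {ffun 'I_n -> S})
  : {ffun 'I_n.+1 -> S} :=
  [ffun k => if unlift i k is Some j then sr j else s].

(* empirical measure (1/N) sum_{s' in sr} delta_{s'}, N = n.+1 agents in total *)
Definition empirical (R : realType) (S : finType) (n : nat) (sr : {ffun 'I_n -> S})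
  : {ffun S -> R} :=
  [ffun x => (n.+1)%:R^-1 * \sum_(j < n) (sr j == x)%:R].

(* The reward, the transition kernel and (because [mu] is shared by all agents)
   the factorized policy are unchanged when all agents are relabelled by the
   same permutation.  Hence so is every t-step expectation of the reward, and
   therefore the value function.  Permuting the other agents is such a
   relabelling, one that fixes the distinguished agent.  Finally, two
   configurations of the other agents have the same empirical measure exactly
   when one is a permutation of the other, so the value factors through the
   empirical measure. *)

From HB Require Import structures.
From mathcomp Require Import all_boot all_order all_algebra perm.
From mathcomp Require Import all_classical all_reals all_analysis.
Import Order.TTheory GRing.Theory Num.Theory.
Local Open Scope ring_scope.

Section Permute.
Context {T : Type} {M : nat}.
Variable k : {perm 'I_M}.

Lemma permuteK : cancel (@permute T M k) (permute k^-1).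
Proof. by move=> x; apply/ffunP => j; rewrite !ffunE permKV. Qed.

Lemma permute_inj : injective (@permute T M k).
Proof. exact: can_inj permuteK. Qed.

End Permute.

Lemma fact_policy_permute {R : realType} {S A : finType} {N : nat}
    (mu : S -> A -> R) (k : {perm 'I_N}) (s : jstate S N) (a : jaction A N) :
  fact_policy mu (permute k s) (permute k a) = fact_policy mu s a.
Proof.
rewrite /fact_policy [RHS](reindex_inj (@perm_inj _ k)) /=.
by apply: eq_bigr => j _; rewrite !ffunE.
Qed.

Section RelabellingInvariance.
Context {R : realType} {S A : finType} {N : nat}.
Context {r : jstate S N -> jaction A N -> R}
        {P : jstate S N -> jaction A N -> jstate S N -> R}
        {nu : jstate S N -> jaction A N -> R} {k : {perm 'I_N}}.
Hypothesis r_permute : forall s a, r (permute k s) (permute k a) = r s a.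
Hypothesis P_permute :
  forall s a s', P (permute k s) (permute k a) (permute k s') = P s a s'.
Hypothesis nu_permute : forall s a, nu (permute k s) (permute k a) = nu s a.

Lemma r_pol_permute (s : jstate S N) : r_pol r nu (permute k s) = r_pol r nu s.
Proof.
rewrite /r_pol [LHS](reindex_inj (permute_inj k)) /=.
by apply: eq_bigr => a _; rewrite nu_permute r_permute.
Qed.

Lemma K_pol_permute (s s' : jstate S N) :
  K_pol P nu (permute k s) (permute k s') = K_pol P nu s s'.
Proof.
rewrite /K_pol [LHS](reindex_inj (permute_inj k)) /=.
by apply: eq_bigr => a _; rewrite nu_permute P_permute.
Qed.

Lemma expect_t_permute (f : jstate S N -> R) :
  (forall s, f (permute k s) = f s) ->
  forall t s, expect_t P nu t f (permute k s) = expect_t P nu t f s.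
Proof.
move=> f_permute t; elim: t => [|t IH] s //=.
rewrite [LHS](reindex_inj (permute_inj k)) /=.
by apply: eq_bigr => s' _; rewrite K_pol_permute IH.
Qed.

Lemma value_permute (gamma : R) (s : jstate S N) :
  value r P nu gamma (permute k s) = value r P nu gamma s.
Proof.
rewrite /value.
by under eq_fun => m do under eq_bigr => t _ do
  rewrite (expect_t_permute _ r_pol_permute).
Qed.

End RelabellingInvariance.

Lemma join_permute (S : Type) (n : nat) (i : 'I_n.+1) (s : S)
    (sr : {ffun 'I_n -> S}) (k : {perm 'I_n}) :
  join i s (permute k sr) = permute (lift_perm i i k) (join i s sr).
Proof.
apply/ffunP => m; rewrite !ffunE.
case: (unliftP i m) => [j ->|->]; last by rewrite lift_perm_id unlift_none.
by rewrite lift_perm_lift liftK ffunE.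
Qed.

Lemma perm_eq_codom_permute (T : eqType) (n : nat) (x y : {ffun 'I_n -> T}) :
  perm_eq (codom y) (codom x) -> exists k : {perm 'I_n}, y = permute k x.
Proof.
have -> : codom x = [tuple x j | j < n] by rewrite codomE.
move=> /tuple_permP[k codom_y]; exists k.
apply/ffunP => j; rewrite ffunE.
have := congr1 (nth (x j) ^~ j) codom_y.
by rewrite codomE (nth_map j) ?size_enum_ord // nth_ord_enum -tnth_nth !tnth_mktuple.
Qed.

Lemma count_mem_codom (T : finType) (n : nat) (x : {ffun 'I_n -> T}) (t : T) :
  count_mem t (codom x) = (\sum_(j < n) (x j == t))%N.
Proof.
rewrite codomE -sum1_count big_map big_enum_cond /= big_mkcond /=.
by apply: eq_bigr => j _; case: (x j == t).
Qed.

Lemma empirical_eq_permute (R : realType) (S : finType) (n : nat)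
    (x y : {ffun 'I_n -> S}) :
  empirical R x = empirical R y -> exists k : {perm 'I_n}, y = permute k x.
Proof.
move=> /ffunP empirical_xy; apply: perm_eq_codom_permute.
have N_neq0 : (n.+1)%:R^-1 != 0 :> R by rewrite invr_eq0 pnatr_eq0.
apply/allP => t _ /=; rewrite !count_mem_codom -(eqr_nat R) !natr_sum.
by have := empirical_xy t; rewrite !ffunE => /(mulfI N_neq0)->.
Qed.

Section FactorThrough.
Context {X Y Z : Type}.
Variables (z0 : Z) (h : X -> Y) (f : X -> Z).

Definition factor_through (y : Y) : Z :=
  if pselect (exists x, h x = y) is left hx then f (projT1 (cid hx)) else z0.

Lemma factor_throughE :
  (forall x x', h x = h x' -> f x = f x') -> forall x, factor_through (h x) = f x.
Proof.
move=> f_fibres x; rewrite /factor_through.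
case: pselect => [hx|]; last by case; exists x.
by case: (cid hx) => x' /= /f_fibres.
Qed.

End FactorThrough.

Theorem proposition2 (R : realType) (S A : finType) (n : nat)
  (r : jstate S n.+1 -> jaction A n.+1 -> R)
  (P : jstate S n.+1 -> jaction A n.+1 -> jstate S n.+1 -> R)
  (mu : S -> A -> R) (gamma : R)
  (hgamma : 0 < gamma < 1)
  (hP0 : forall s a s', 0 <= P s a s')
  (hP1 : forall s a, \sum_(s' : jstate S n.+1) P s a s' = 1)
  (hmu0 : forall x b, 0 <= mu x b)
  (hmu1 : forall x, \sum_(b : A) mu x b = 1)
  (hr : forall (k : {perm 'I_n.+1}) s a, r (permute k s) (permute k a) = r s a)
  (hPk : forall (k : {perm 'I_n.+1}) s a s',
      P (permute k s) (permute k a) (permute k s') = P s a s')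
  (i : 'I_n.+1) :
  let V := value r P (fact_policy mu) gamma in
  (forall (s : S) (sr : {ffun 'I_n -> S}) (k : {perm 'I_n}),
      V (join i s sr) = V (join i s (permute k sr)))
  /\
  (exists g : S -> {ffun S -> R} -> R,
      forall (s : S) (sr : {ffun 'I_n -> S}),
        V (join i s sr) = g s (empirical R sr)).
Proof.
move=> V.
have V_join_permute s sr k : V (join i s sr) = V (join i s (permute k sr)).
  by rewrite join_permute /V (value_permute (hr _) (hPk _) (fact_policy_permute mu _)).
split=> //.
exists (fun s => factor_through 0 (@empirical R S n) (fun sr => V (join i s sr))).
move=> s sr; rewrite factor_throughE // => sr1 sr2 /empirical_eq_permute[k ->].
exact: V_join_permute.
Qed.
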